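(* For integers $n\ge k\ge 0$ define the Salié coefficients $s(n,k)$ by the bivariate generating function $$\sum_{n,k\ge 0}\frac{x^{2n}}{(2n)!}\,s(n,k)\,y^{k}=\frac{\cosh\!\left(\tfrac12 x\sqrt{1+4y}\right)}{\cosh\!\left(\tfrac12 x\right)},$$ and set $\epsilon(n,k)=|s(n,k)|/4^{k}$. For a positive integer $N$, let $M_E$ be the $N\times N$ lower triangular matrix with entries $(M_E)_{m,n}=(-1)^{m-n}4^{m}\binom{m}{2(m-n)}$ for $1\le n\le m\le N$ (and $0$ for $n>m$). Then $s(n,k)=(-1)^{n-k}|s(n,k)|$ for all $n\ge k\ge 1$, the matrix $M_E$ is invertible with $(M_E^{-1})_{n,k}=\epsilon(n,k)$ for $1\le k\le n\le N$, and for every $n\ge1$ $$|E_{2n}(1/2)|=(-1)^{n}E_{2n}(1/2)=\sum_{k=1}^{n}\epsilon(n,k).$$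
   Context: $E_m(x)$ denotes the Euler polynomials, defined by $\frac{2e^{xt}}{e^{t}+1}=\sum_{m\ge0}E_m(x)\frac{t^m}{m!}$. Equivalently, the column vector $\vec E$ with entries $|E_{2n}(1/2)|$, $n=1,\dots,N$, satisfies $M_E\vec E=\vec 1$ (the all-ones column). *)

From HB Require Import structures.
From mathcomp Require Import all_boot all_order all_algebra.
Set Implicit Arguments. Unset Strict Implicit. Unset Printing Implicit Defensive.
Import Order.TTheory GRing.Theory Num.Theory.
Local Open Scope ring_scope.

(* s satisfies the Salié generating-function identity
     sum_{n,k} x^{2n}/(2n)! s(n,k) y^k = cosh(x sqrt(1+4y)/2) / cosh(x/2)
   as formal power series, written coefficientwise after multiplying by
   cosh(x/2) = sum_m 4^{-m} x^{2m}/(2m)!, and using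
   cosh(x sqrt(1+4y)/2) = sum_n (1+4y)^n 4^{-n} x^{2n}/(2n)!:
   coefficient of x^{2n}/(2n)! y^k on both sides. *)
Definition salie_gf (s : nat -> nat -> rat) : Prop :=
  forall n k : nat,
    \sum_(j < n.+1) ('C(n.*2, j.*2)%:R / 4 ^+ (n - j)) * s j k
    = 'C(n, k)%:R * 4 ^+ k / 4 ^+ n.

(* E is the family of Euler polynomials: 2 e^{xt}/(e^t+1) = sum_m E_m(x) t^m/m!,
   i.e. (e^t + 1) * sum_m E_m(x) t^m/m! = 2 e^{xt}, coefficient of t^m/m!. *)
Definition euler_gf (E : nat -> {poly rat}) : Prop :=
  forall m : nat, \sum_(j < m.+1) 'C(m, j)%:R *: E j + E m = 2%:R *: 'X^m.

Definition eps (s : nat -> nat -> rat) (n k : nat) : rat := `|s n k| / 4 ^+ k.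

(* M_E (N x N), with 1-based index m = i+1, n = j+1 for i j : 'I_N:
   (M_E)_{m,n} = (-1)^{m-n} 4^m binom(m, 2(m-n)) if n <= m, 0 otherwise. *)
Definition ME (N : nat) : 'M[rat]_N :=
  \matrix_(i < N, j < N)
    if (j <= i)%N then (-1) ^+ (i - j) * 4 ^+ i.+1 * 'C(i.+1, (i - j).*2)%:R
    else 0.

(* Replacing x by 2ix and y by -y turns the generating function of s into
   cos(x sqrt(1 - 4y)) / cos x.  Its y^k-coefficient g_k, the exponential
   generating function of (-1)^(n+k) 4^n s(n,k), satisfies
   g_k'' = 2 tan(x) g_k' + 4 g_(k-1), because cos x * g_k is elementary; as tan
   has nonnegative Taylor coefficients, induction on k gives the signs of s.
   At y = -1/4 the generating function is 1/cosh(x/2), which is also the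
   exponential generating function of E_n(1/2), so E_2n(1/2) is
   sum_k s(n,k) (-1/4)^k.  Finally (1 + 2X)^(2n) = (1 + 4X(1 + X))^n shows that
   the matrix [C(m, 2(m - l))] is the inverse of [s(n,k)]; with the signs of s
   this is M_E^-1 = [eps(n,k)]. *)

From HB Require Import structures.
From mathcomp Require Import all_boot all_order all_algebra.
From mathcomp Require Import ring zify.
Import Order.TTheory GRing.Theory Num.Theory.
Set Implicit Arguments.
Unset Strict Implicit.
Unset Printing Implicit Defensive.

Local Open Scope ring_scope.

Lemma sumr_even_odd (V : nmodType) (F : nat -> V) n :
  \sum_(i < n.*2.+1) F i = \sum_(i < n.+1) F i.*2 + \sum_(i < n) F i.*2.+1.
Proof.
elim: n => [|n IHn]; first by rewrite !big_ord1 big_ord0 addr0.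
rewrite doubleS big_ord_recr big_ord_recr /= IHn.
rewrite (big_ord_recr n.+1) (big_ord_recr n (fun i => F i.*2.+1)) /= doubleS.
by rewrite -!addrA; congr (_ + _); rewrite addrA addrC.
Qed.

Section ExponentialGeneratingFunctions.

Variable R : comPzRingType.
Implicit Types (f g h a : nat -> R).

(* A sequence [f] stands for the exponential generating function
   sum_n f n x^n / n!. *)
Definition egf_mul f g (n : nat) : R :=
  \sum_(i < n.+1) 'C(n, i)%:R * f i * g (n - i)%N.

Definition egf_deriv f (n : nat) : R := f n.+1.

Definition even_egf a (n : nat) : R := if odd n then 0 else a n./2.

Lemma eq_egf_mul f f' g g' :
  f =1 f' -> g =1 g' -> egf_mul f g =1 egf_mul f' g'.
Proof. by move=> ef eg n; apply: eq_bigr => i _; rewrite ef eg. Qed.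

Lemma egf_mulC f g : egf_mul f g =1 egf_mul g f.
Proof.
move=> n; rewrite /egf_mul (reindex_inj rev_ord_inj) /=; apply: eq_bigr => i _.
have le_in : (i <= n)%N by rewrite -ltnS.
by rewrite subSS bin_sub // subKn // mulrAC.
Qed.

Lemma egf_mulDr f g h n :
  egf_mul f (fun m => g m + h m) n = egf_mul f g n + egf_mul f h n.
Proof. by rewrite /egf_mul -big_split; apply: eq_bigr => i _; rewrite mulrDr. Qed.

Lemma egf_mulNr f g n : egf_mul f (fun m => - g m) n = - egf_mul f g n.
Proof. by rewrite /egf_mul -sumrN; apply: eq_bigr => i _; rewrite mulrN. Qed.

Lemma egf_mulZr c f g n :
  egf_mul f (fun m => c * g m) n = c * egf_mul f g n.
Proof. by rewrite /egf_mul mulr_sumr; apply: eq_bigr => i _; rewrite mulrCA. Qed.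

Lemma egf_mulDl f g h n :
  egf_mul (fun m => f m + g m) h n = egf_mul f h n + egf_mul g h n.
Proof. by rewrite egf_mulC egf_mulDr !(egf_mulC h). Qed.

Lemma egf_mul1 f n : egf_mul f (fun m => (m == 0)%:R) n = f n.
Proof.
rewrite /egf_mul big_ord_recr /= subnn binn mulr1 mul1r big1 ?add0r // => i _.
by rewrite subn_eq0 leqNgt ltn_ord mulr0.
Qed.

Lemma egf_mul_exp (x y : R) n :
  egf_mul (fun m => x ^+ m) (fun m => y ^+ m) n = (x + y) ^+ n.
Proof.
rewrite addrC exprDn /egf_mul; apply: eq_bigr => i _.
by rewrite -mulr_natr; ring.
Qed.

Lemma egf_mul_derivE f g n :
  egf_mul f g n.+1 = egf_mul (egf_deriv f) g n + egf_mul f (egf_deriv g) n.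
Proof.
rewrite /egf_mul /egf_deriv big_ord_recl /= bin0 subn0.
under eq_bigr => i _ do rewrite /bump /= add1n binS natrD !mulrDl subSS.
rewrite big_split /= addrA [RHS]addrC; congr (_ + _).
rewrite [RHS]big_ord_recl big_ord_recr /= bin_small // mulr0n !mul0r addr0 bin0 subn0.
congr (_ + _); apply: eq_bigr => i _.
by rewrite /bump /= add1n subnSK.
Qed.

Lemma egf_mulA f g h n :
  egf_mul (egf_mul f g) h n = egf_mul f (egf_mul g h) n.
Proof.
elim: n f g h => [|n IHn] f g h.
  by rewrite /egf_mul !big_ord1 !bin0 !mul1r mulrA.
rewrite egf_mul_derivE (eq_egf_mul (egf_mul_derivE f g) (frefl h)) egf_mulDl !IHn.
rewrite egf_mul_derivE (eq_egf_mul (frefl f) (egf_mul_derivE g h)) egf_mulDr.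
by rewrite addrA.
Qed.

Lemma egf_mul0l g n : egf_mul (fun _ => 0) g n = 0.
Proof. by apply: big1 => i _; rewrite mulr0 mul0r. Qed.

Lemma egf_mul_derivE2 f g n :
  egf_mul f g n.+2 = egf_mul (egf_deriv (egf_deriv f)) g n
    + 2%:R * egf_mul (egf_deriv f) (egf_deriv g) n
    + egf_mul f (egf_deriv (egf_deriv g)) n.
Proof. by rewrite !egf_mul_derivE; ring. Qed.

Lemma egf_mul_lreg_eq0 f g :
  GRing.lreg (f 0%N) -> (forall n, egf_mul f g n = 0) -> forall n, g n = 0.
Proof.
move=> reg_f0 fg0; elim/ltn_ind => n IHn; apply/eqP; rewrite -(mulrI_eq0 _ reg_f0).
have := fg0 n; rewrite /egf_mul big_ord_recl big1 => [|i _].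
  by rewrite bin0 subn0 mul1r addr0 => ->.
by rewrite IHn ?mulr0 //= /bump; have := ltn_ord i; lia.
Qed.

Lemma egf_linear_ode_eq0 f h :
  f 0%N = 0 -> (forall n, f n.+1 = egf_mul h f n) -> forall n, f n = 0.
Proof.
move=> f0 fS; elim/ltn_ind => -[|n] IHn //; rewrite fS /egf_mul big1 // => i _.
by rewrite IHn ?mulr0 // ltnS leq_subr.
Qed.

Lemma egf_mul_even f a m :
  egf_mul f (even_egf a) m.*2
  = \sum_(j < m.+1) 'C(m.*2, j.*2)%:R * f j.*2 * a (m - j)%N.
Proof.
rewrite /egf_mul (sumr_even_odd (fun i => 'C(m.*2, i)%:R * f i * even_egf a (m.*2 - i))).
rewrite [X in _ + X]big1 ?addr0 => [|j _]; last first.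
  by rewrite /even_egf oddB /= ?odd_double ?mulr0 // ltn_double.
apply: eq_bigr => j _.
by rewrite /even_egf -doubleB odd_double half_double.
Qed.

Lemma egf_mul_even_odd a b m :
  egf_mul (even_egf a) (even_egf b) m.*2.+1 = 0.
Proof.
rewrite /egf_mul big1 // => i _; rewrite /even_egf.
have le_i : (i <= m.*2.+1)%N by rewrite -ltnS.
rewrite oddB //= odd_double /=; case: (odd i) => /=; first by rewrite mulr0 mul0r.
by rewrite mulr0.
Qed.

End ExponentialGeneratingFunctions.

Section Tangent.

Variable R : comPzRingType.
Implicit Types g : nat -> R.

Definition cos_egf : nat -> R := even_egf (fun j => (-1) ^+ j).

(* [tan_upto n] tabulates the coefficients [0..n] of the solution of
   [t' = 1 + t^2], [t(0) = 0], i.e. of [tan]. *)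
Fixpoint tan_upto (n : nat) : nat -> R :=
  if n is m.+1 then
    fun i => if (i <= m)%N then tan_upto m i
             else (m == 0)%:R + egf_mul (tan_upto m) (tan_upto m) m
  else fun _ => 0.

Definition tan_egf (n : nat) : R := tan_upto n n.

Lemma cos_egfSS n : cos_egf n.+2 = - cos_egf n.
Proof.
by rewrite /cos_egf /even_egf /= negbK; case: ifP; rewrite ?oppr0 // exprS mulN1r.
Qed.

Lemma tan_uptoE n i : (i <= n)%N -> tan_upto n i = tan_egf i.
Proof.
elim: n => [|n IHn] le_in; first by move: le_in; rewrite leqn0 => /eqP ->.
rewrite /=; case: ifP => [/IHn // | /negbT]; rewrite -ltnNge => lt_ni.
by rewrite /tan_egf (_ : i = n.+1) /= ?ltnn //; apply/eqP; rewrite eqn_leq le_in.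
Qed.

Lemma tan_egfS n : tan_egf n.+1 = (n == 0)%:R + egf_mul tan_egf tan_egf n.
Proof.
rewrite {1}/tan_egf /= ltnn; congr (_ + _); apply: eq_bigr => i _.
by rewrite !tan_uptoE // ?leq_subr // -ltnS.
Qed.

Lemma cos_mul_tan n : egf_mul cos_egf tan_egf n = - cos_egf n.+1.
Proof.
apply/eqP; rewrite -addr_eq0; apply/eqP; move: n.
apply: (egf_linear_ode_eq0 (h := tan_egf)
  (f := fun n => egf_mul cos_egf tan_egf n + cos_egf n.+1)) => [|n].
  by rewrite /egf_mul big_ord1 /tan_egf /= mulr0 add0r.
rewrite egf_mul_derivE cos_egfSS (eq_egf_mul (frefl cos_egf) tan_egfS).
rewrite (egf_mulDr cos_egf) egf_mul1 -egf_mulA egf_mulDr.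
rewrite (egf_mulC tan_egf) (egf_mulC _ tan_egf).
by rewrite /egf_deriv; ring.
Qed.

Lemma egf_cos_ode g g' :
  (forall n, egf_mul g cos_egf n.+2 + egf_mul g cos_egf n
             = 4%:R * egf_mul g' cos_egf n) ->
  forall n, g n.+2 = 2%:R * egf_mul tan_egf (egf_deriv g) n + 4%:R * g' n.
Proof.
(* cos is invertible and cos * tan = - cos', so multiplying the claimed
   equation by cos turns it into the hypothesis. *)
move=> cos_rec; pose G n := 2%:R * egf_mul tan_egf (egf_deriv g) n + 4%:R * g' n.
have cos_mulG n : egf_mul cos_egf (fun m => g m.+2 - G m) n = 0.
  rewrite egf_mulDr egf_mulNr egf_mulDr !egf_mulZr -egf_mulA.
  rewrite (eq_egf_mul cos_mul_tan (frefl _)) (egf_mulC (fun m => - _)) egf_mulNr.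
  have := cos_rec n; rewrite egf_mul_derivE2 (eq_egf_mul (frefl g) cos_egfSS) egf_mulNr.
  rewrite !(egf_mulC cos_egf) (egf_mulC (egf_deriv g)) => <-.
  by rewrite /egf_deriv; ring.
move=> n; apply/eqP; rewrite -subr_eq0; apply/eqP.
exact: egf_mul_lreg_eq0 (@lreg1 R) cos_mulG n.
Qed.

End Tangent.

Section Positivity.

Variable R : numDomainType.
Implicit Types g : nat -> R.

Lemma tan_egf_ge0 n : 0 <= tan_egf R n.
Proof.
elim/ltn_ind: n => -[|n] IHn //; rewrite tan_egfS addr_ge0 ?ler0n //.
rewrite sumr_ge0 // => i _; have le_in : (i <= n)%N by rewrite -ltnS.
by rewrite !mulr_ge0 ?ler0n ?IHn // ltnS leq_subr.
Qed.

Lemma egf_cos_ode_ge0 g g' :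
  (forall n, egf_mul g (cos_egf R) n.+2 + egf_mul g (cos_egf R) n
             = 4%:R * egf_mul g' (cos_egf R) n) ->
  (forall n, 0 <= g' n) -> 0 <= g 0%N -> 0 <= g 1%N -> forall n, 0 <= g n.
Proof.
move=> cos_rec g'_ge0 g0 g1; elim/ltn_ind => -[|[|n]] IHn //.
rewrite (egf_cos_ode cos_rec) addr_ge0 ?mulr_ge0 ?ler0n // sumr_ge0 // => i _.
by rewrite !mulr_ge0 ?ler0n ?tan_egf_ge0 // IHn // !ltnS leq_subr.
Qed.

End Positivity.

Lemma big_ord_widen_eq0 (V : nmodType) (F : nat -> V) m n :
  (m <= n)%N -> (forall i, (m <= i)%N -> F i = 0) ->
  \sum_(i < m) F i = \sum_(i < n) F i.
Proof.
move=> le_mn F0; rewrite (big_ord_widen _ _ le_mn) big_mkcond /=.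
by apply: eq_bigr => i _; case: ltnP => // /F0 ->.
Qed.

Lemma coef_binom (R : comNzSemiRingType) (c : R) m i :
  ((1 + c%:P * 'X) ^+ m)`_i = c ^+ i *+ 'C(m, i).
Proof.
elim: m i => [|m IHm] i.
  by rewrite expr0 coef1; case: i => [|i]; rewrite ?bin0 ?bin0n.
rewrite exprSr mulrDr mulr1 coefD mulrA coefMX.
case: i => [|i] /=; first by rewrite IHm !bin0 addr0.
by rewrite coefMC !IHm binS mulrnDr exprS mulrnAl (mulrC _ c).
Qed.

(* Up to the factor (-1)^(m-l) 4^m, the entries of M_E. *)
Definition salie_inv_coef (m l : nat) : nat :=
  if (l <= m)%N then 'C(m, (m - l).*2) else 0.

Lemma salie_inv_coefE m l :
  salie_inv_coef m l = if (l.*2 < m)%N then 0%N else 'C(m, l.*2 - m).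
Proof.
rewrite /salie_inv_coef; case: ltnP => [lt_2lm | le_m2l].
  by case: leqP => // le_lm; rewrite bin_small //; lia.
case: leqP => [le_lm | lt_ml]; last by rewrite bin_small //; lia.
by rewrite (_ : l.*2 - m = m - (m - l).*2)%N ?bin_sub //; lia.
Qed.

Lemma sum_binom_salie_inv (R : comNzRingType) n l :
  \sum_(m < n.+1) 'C(n, m)%:R * 4 ^+ m * (salie_inv_coef m l)%:R
  = 4 ^+ l * 'C(n.*2, l.*2)%:R :> R.
Proof.
have e : (1 + 2%:P * 'X) ^+ n.*2 = (1 + 4%:P * ('X * (1 + 1%:P * 'X))) ^+ n :> {poly R}.
  by rewrite -mul2n exprM; congr (_ ^+ n); rewrite !polyC_natr polyC1; ring.
rewrite (_ : _ * _ = (((1 + 2%:P * 'X) ^+ n.*2 : {poly R}))`_(l.*2)); last first.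
  by rewrite coef_binom -[l.*2]mul2n exprM mulr_natr expr2 -natrM.
rewrite e exprDn coef_sum; apply: eq_bigr => m _.
rewrite expr1n mul1r coefMn !exprMn -polyC_exp coefCM coefXnM coef_binom expr1n.
rewrite mulrnAl mul1r mulrnAl salie_inv_coefE.
by case: ifP; rewrite ?mulr0n ?mulr0 ?mul0rn.
Qed.

Lemma sign_ge0_norm (R : numDomainType) n (x : R) :
  0 <= (-1) ^+ n * x -> `|x| = (-1) ^+ n * x.
Proof.
by move=> ge0; rewrite -[in LHS](signrMK n x) normrM normr_sign mul1r ger0_norm.
Qed.

Lemma triangular_unique (R : pzRingType) (c : nat -> nat -> R) (x y : nat -> R) K :
  (forall n, c n n = 1) ->
  (forall n, (n < K)%N ->
     \sum_(j < n.+1) c n j * x j = \sum_(j < n.+1) c n j * y j) ->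
  forall n, (n < K)%N -> x n = y n.
Proof.
move=> c_diag xy; elim/ltn_ind => n IHn lt_nK.
have := xy n lt_nK; rewrite !big_ord_recr /= c_diag !mul1r.
rewrite (eq_bigr (fun j : 'I_n => c n j * y j)) => [/addrI // | j _].
by rewrite IHn // (ltn_trans _ lt_nK).
Qed.

(* On even exponential generating functions, written in x^(2n)/(2n)!,
   [cosh_coef] is multiplication by cosh(x/2), and [cosh_sqrt_coef n k] is
   the coefficient of y^k x^(2n)/(2n)! in cosh(x sqrt(1 + 4y) / 2);
   [salie_gf] says [cosh_coef * s = cosh_sqrt_coef]. *)
Definition cosh_coef (n j : nat) : rat := 'C(n.*2, j.*2)%:R / 4 ^+ (n - j).

Definition cosh_sqrt_coef (n k : nat) : rat := 'C(n, k)%:R * 4 ^+ k / 4 ^+ n.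

Lemma cosh_coef_diag n : cosh_coef n n = 1.
Proof. by rewrite /cosh_coef binn subnn expr0 divr1. Qed.

Lemma cosh_sqrt_mul_salie_inv n l : (l <= n)%N ->
  \sum_(j < n.+1) cosh_sqrt_coef n j * (salie_inv_coef j l)%:R = cosh_coef n l.
Proof.
move=> le_ln; have e4 : (4 : rat) ^+ n = 4 ^+ (n - l) * 4 ^+ l by rewrite -exprD subnK.
transitivity (((4 : rat) ^+ n)^-1
              * \sum_(j < n.+1) 'C(n, j)%:R * 4 ^+ j * (salie_inv_coef j l)%:R).
  by rewrite mulr_sumr; apply: eq_bigr => j _; rewrite /cosh_sqrt_coef mulrAC mulrC.
by rewrite sum_binom_salie_inv e4 /cosh_coef; field; rewrite !expf_neq0.
Qed.

Section EulerHalf.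

Variable E : nat -> {poly rat}.
Hypothesis hE : euler_gf E.

Let a (n : nat) : rat := (E n).[2^-1].

Lemma euler_half_rec m :
  egf_mul a (fun n => 1 ^+ n) m + a m = 2 * (2^-1) ^+ m.
Proof.
have := congr1 (horner^~ 2^-1) (hE m).
rewrite /= hornerD horner_sum hornerZ hornerXn => <-; congr (_ + _).
by apply: eq_bigr => j _; rewrite hornerZ expr1n mulr1.
Qed.

Lemma euler_half_cosh n :
  egf_mul a (even_egf (fun j => 2 * (4^-1) ^+ j)) n = 2 * (n == 0%N)%:R.
Proof.
have cosh_half m :
    even_egf (fun j => 2 * (4^-1) ^+ j) m = (2^-1) ^+ m + (- 2^-1) ^+ m :> rat.
  rewrite -[m]odd_double_half /even_egf exprNn -signr_odd.
  case: (odd m); rewrite ?add1n ?add0n /= odd_double /=; first by rewrite mulN1r subrr.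
  rewrite half_double mul1r -mul2n exprM (_ : (2^-1) ^+ 2 = 4^-1 :> rat); last by field.
  by rewrite -mulr2n mulr_natl.
(* Multiply (e^t + 1) a = 2 e^(t/2) by e^(-t/2). *)
rewrite (eq_egf_mul (frefl a) cosh_half) egf_mulDr !(egf_mulC a).
have := eq_egf_mul (frefl (fun m => (- 2^-1) ^+ m)) euler_half_rec n.
rewrite egf_mulDr egf_mulZr egf_mul_exp addNr expr0n.
rewrite (eq_egf_mul (frefl _) (egf_mulC _ _)) -egf_mulA.
rewrite (eq_egf_mul (egf_mul_exp (- 2^-1 : rat) 1) (frefl a)).
by rewrite (_ : - 2^-1 + 1 = 2^-1 :> rat) 1?addrC => [->|]; last field.
Qed.

Lemma euler_half_even n :
  \sum_(j < n.+1) cosh_coef n j * (E j.*2).[2^-1] = (n == 0%N)%:R.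
Proof.
have := euler_half_cosh n.*2; rewrite egf_mul_even double_eq0 => e.
apply: (mulfI (x := 2)) => //; rewrite -e mulr_sumr; apply: eq_bigr => j _.
by rewrite /a /cosh_coef exprVn; field; rewrite expf_neq0.
Qed.

End EulerHalf.

Section Salie.

Variable s : nat -> nat -> rat.
Hypothesis hs : salie_gf s.

Lemma salie_cosh n k :
  \sum_(j < n.+1) cosh_coef n j * s j k = cosh_sqrt_coef n k.
Proof. exact: hs. Qed.

Lemma salie0 k : s 0%N k = (k == 0%N)%:R.
Proof.
have := salie_cosh 0 k.
rewrite big_ord1 cosh_coef_diag mul1r /cosh_sqrt_coef expr0 divr1 => ->.
by case: k => [|k]; rewrite ?bin0 ?expr0 ?mulr1 // bin0n mul0r.
Qed.

Lemma salie_small j k : (j < k)%N -> s j k = 0.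
Proof.
move=> lt_jk; apply: (triangular_unique (c := cosh_coef) (x := s^~ k) (y := fun _ => 0)
  cosh_coef_diag _ lt_jk) => n lt_nk.
rewrite salie_cosh /cosh_sqrt_coef bin_small // mulr0n !mul0r.
by rewrite big1 // => i _; rewrite mulr0.
Qed.

Lemma salie_n0 n : (0 < n)%N -> s n 0%N = 0.
Proof.
move=> n_gt0; transitivity ((n == 0%N)%:R : rat); last by rewrite eqn0Ngt n_gt0.
apply: (triangular_unique (c := cosh_coef) (x := s^~ 0%N) (y := fun j => (j == 0%N)%:R)
  cosh_coef_diag _ (ltnSn n)) => m _.
rewrite salie_cosh big_ord_recl big1 => [|j _]; last by rewrite mulr0.
by rewrite /cosh_coef /cosh_sqrt_coef /= !bin0 subn0 expr0 !mulr1 addr0.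
Qed.

(* The y^k-coefficient of cos(x sqrt(1 - 4y)) / cos x. *)
Definition salie_egf (k : nat) : nat -> rat :=
  even_egf (fun j => (-1) ^+ (j + k) * 4 ^+ j * s j k).

Lemma salie_egf_cos k n :
  egf_mul (salie_egf k) (cos_egf rat) n
  = even_egf (fun m => (-1) ^+ (m + k) * 'C(m, k)%:R * 4 ^+ k) n.
Proof.
rewrite -[n]odd_double_half; case: (odd n); rewrite ?add1n ?add0n.
  by rewrite egf_mul_even_odd /even_egf /= odd_double.
set m := n./2; rewrite egf_mul_even /even_egf odd_double half_double /=.
have -> : (-1) ^+ (m + k) * 'C(m, k)%:R * 4 ^+ k
          = (-1) ^+ (m + k) * 4 ^+ m * cosh_sqrt_coef m k.
  by rewrite /cosh_sqrt_coef; field; rewrite expf_neq0.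
rewrite -salie_cosh mulr_sumr; apply: eq_bigr => j _.
have le_jm : (j <= m)%N by rewrite -ltnS.
rewrite /salie_egf /even_egf odd_double half_double /cosh_coef.
have -> : (4 : rat) ^+ m = 4 ^+ (m - j) * 4 ^+ j by rewrite -exprD subnK.
have -> : (-1) ^+ (m + k) = (-1) ^+ (j + k) * (-1) ^+ (m - j) :> rat.
  by rewrite -exprD; congr (_ ^+ _); lia.
by field; rewrite expf_neq0.
Qed.

Lemma salie_egf_ge0 k n : 0 <= salie_egf k n.
Proof.
have col_0 j : salie_egf j 0%N = (j == 0%N)%:R.
  by case: j => [|j]; rewrite /salie_egf /even_egf /= salie0 ?mulr0 //
     add0n !expr0 !mulr1.
elim: k n => [|k IHk].
  apply: (egf_cos_ode_ge0 (g' := fun _ => 0)) => // [n|]; last by rewrite col_0.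
  rewrite egf_mul0l mulr0 !salie_egf_cos /even_egf /= negbK.
  by case: ifP => _; rewrite ?addr0 // !bin0 !addn0 exprS; ring.
apply: (egf_cos_ode_ge0 (g' := salie_egf k)) => // [n|]; last by rewrite col_0 ler0n.
rewrite !salie_egf_cos /even_egf /= negbK.
case: ifP => _; rewrite ?addr0 ?mulr0 // binS natrD !addnS !exprS.
by ring.
Qed.

Lemma salie_norm j k : `|s j k| = (-1) ^+ (j + k) * s j k.
Proof.
have := salie_egf_ge0 k j.*2; rewrite /salie_egf /even_egf odd_double half_double.
by rewrite mulrAC pmulr_lge0 ?exprn_gt0 // => /sign_ge0_norm.
Qed.

Lemma salie_inv_mul m k :
  \sum_(l < m.+1) (salie_inv_coef m l)%:R * s l k = (m == k)%:R.
Proof.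
apply: (triangular_unique (c := cosh_sqrt_coef) (y := fun m => (m == k)%:R)
  (x := fun m => \sum_(l < m.+1) (salie_inv_coef m l)%:R * s l k) _ _ (ltnSn m)).
  by move=> n; rewrite /cosh_sqrt_coef binn mul1r divff // expf_neq0.
move=> n _; transitivity (cosh_sqrt_coef n k).
  rewrite -salie_cosh; under eq_bigr => j _.
    rewrite (big_ord_widen_eq0 (F := fun l => (salie_inv_coef j l)%:R * s l k)
               (ltn_ord j)); last first.
      by move=> l lt_jl; rewrite /salie_inv_coef leqNgt lt_jl mul0r.
    rewrite mulr_sumr; over.
  rewrite exchange_big /=; apply: eq_bigr => l _.
  under eq_bigr => j _ do rewrite mulrA.
  by rewrite -mulr_suml cosh_sqrt_mul_salie_inv // -ltnS.
case: (ltnP k n.+1) => [lt_kn | lt_nk].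
  rewrite (bigD1 (Ordinal lt_kn)) //= eqxx mulr1 big1 ?addr0 // => j.
  by rewrite -val_eqE /= eq_sym => /negbTE ->; rewrite mulr0.
rewrite /cosh_sqrt_coef bin_small // !mul0r big1 // => j _.
by rewrite ltn_eqF ?mulr0 // (leq_trans (ltn_ord j) lt_nk).
Qed.

Lemma salie_eps_inv m k :
  \sum_(l < m.+1) (-1) ^+ (m - l) * 4 ^+ m * 'C(m, (m - l).*2)%:R * eps s l k
  = (m == k)%:R.
Proof.
transitivity ((-1) ^+ (m + k) * 4 ^+ m / 4 ^+ k
              * \sum_(l < m.+1) (salie_inv_coef m l)%:R * s l k).
  rewrite mulr_sumr; apply: eq_bigr => l _.
  have le_lm : (l <= m)%N by rewrite -ltnS.
  have -> : (-1) ^+ (m + k) = (-1) ^+ (m - l) * (-1) ^+ (l + k) :> rat.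
    by rewrite -exprD; congr (_ ^+ _); lia.
  rewrite /eps salie_norm /salie_inv_coef le_lm.
  by field; rewrite expf_neq0.
rewrite salie_inv_mul; case: eqP => [-> | _]; last by rewrite mulr0.
by rewrite addnn -signr_odd odd_double mul1r mulr1 divff // expf_neq0.
Qed.

Lemma ME_mul_eps N : ME N *m \matrix_(i < N, j < N) eps s i.+1 j.+1 = 1%:M.
Proof.
apply/matrixP => i k; rewrite !mxE.
under eq_bigr => l _ do rewrite !mxE.
pose F l := (if (l <= i)%N then (-1) ^+ (i - l) * 4 ^+ i.+1 * 'C(i.+1, (i - l).*2)%:R
             else 0) * eps s l.+1 k.+1.
rewrite -(big_ord_widen_eq0 (F := F) (ltn_ord i)); last first.
  by move=> l lt_il; rewrite /F leqNgt lt_il mul0r.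
have := salie_eps_inv i.+1 k.+1; rewrite big_ord_recl /= bin_small; last first.
  by rewrite -addnn addnS ltnS leq_addr.
rewrite mulr0n mulr0 mul0r add0r eqSS => <-.
by apply: eq_bigr => l _; rewrite /F /bump /= add1n subSS -ltnS ltn_ord.
Qed.

Lemma salie_minus_quarter n :
  \sum_(j < n.+1) cosh_coef n j * (\sum_(k < j.+1) s j k * (- 4^-1) ^+ k)
  = (n == 0%N)%:R.
Proof.
transitivity (\sum_(j < n.+1) \sum_(k < n.+1) cosh_coef n j * (s j k * (- 4^-1) ^+ k)).
  apply: eq_bigr => j _; rewrite mulr_sumr.
  apply: (big_ord_widen_eq0 (F := fun k => cosh_coef n j * (s j k * (- 4^-1) ^+ k))).
    exact: ltn_ord.
  by move=> k lt_jk; rewrite salie_small // mul0r mulr0.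
rewrite exchange_big /=.
transitivity (\sum_(k < n.+1) (- 4^-1) ^+ k * cosh_sqrt_coef n k).
  apply: eq_bigr => k _; rewrite -salie_cosh mulr_sumr.
  by apply: eq_bigr => j _; ring.
transitivity (((4 : rat) ^+ n)^-1 * (1 + -1) ^+ n).
  rewrite (exprDn 1 (-1)) mulr_sumr; apply: eq_bigr => k _.
  rewrite /cosh_sqrt_coef expr1n mul1r -[_ *+ 'C(n, k)]mulr_natr exprNn exprVn.
  by field; rewrite !expf_neq0.
by rewrite addrN expr0n; case: n => [|n]; rewrite ?mulr0 // expr0 invr1 mul1r.
Qed.

Lemma salie_eps_sum n : (0 < n)%N ->
  (-1) ^+ n * \sum_(k < n.+1) s n k * (- 4^-1) ^+ k = \sum_(1 <= k < n.+1) eps s n k.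
Proof.
move=> n_gt0; rewrite mulr_sumr big_ord_recl salie_n0 // mul0r mulr0 add0r.
rewrite big_add1 /= big_mkord; apply: eq_bigr => k _.
rewrite /eps salie_norm /bump /= add1n (exprNn (4^-1 : rat)) exprVn exprD.
by field; rewrite expf_neq0.
Qed.

End Salie.

Lemma euler_half_salie s E : salie_gf s -> euler_gf E ->
  forall n, (E n.*2).[2^-1] = \sum_(k < n.+1) s n k * (- 4^-1) ^+ k.
Proof.
move=> hs hE n; apply: (triangular_unique (c := cosh_coef) (x := fun j => (E j.*2).[2^-1])
  (y := fun j => \sum_(k < j.+1) s j k * (- 4^-1) ^+ k) cosh_coef_diag _ (ltnSn n)).
by move=> m _; rewrite euler_half_even // salie_minus_quarter.
Qed.

Theorem mainTheorem1 (s : nat -> nat -> rat) (E : nat -> {poly rat})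
    (hs : salie_gf s) (hE : euler_gf E) :
  (forall n k : nat, (1 <= k)%N -> (k <= n)%N ->
      s n k = (-1) ^+ (n - k) * `|s n k|) /\
  (forall N : nat, ME N \in unitmx /\
      (forall i j : 'I_N, (j <= i)%N ->
         invmx (ME N) i j = eps s i.+1 j.+1)) /\
  (forall n : nat, (1 <= n)%N ->
      `|(E n.*2).[2^-1]| = (-1) ^+ n * (E n.*2).[2^-1] /\
      (-1) ^+ n * (E n.*2).[2^-1] = \sum_(1 <= k < n.+1) eps s n k).
Proof.
split; [|split].
- move=> n k _ le_kn; rewrite salie_norm // mulrA -exprD.
  rewrite (_ : n - k + (n + k) = n.*2)%N; last by lia.
  by rewrite -signr_odd odd_double mul1r.
- move=> N; have ME_eps := ME_mul_eps hs N; have [ME_unit _] := mulmx1_unit ME_eps.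
  split=> // i j _; have -> : invmx (ME N) = \matrix_(i < N, j < N) eps s i.+1 j.+1.
    by rewrite -[RHS](mulKmx ME_unit) ME_eps mulmx1.
  by rewrite mxE.
- move=> n n_gt0.
  have sum_eps : (-1) ^+ n * (E n.*2).[2^-1] = \sum_(1 <= k < n.+1) eps s n k.
    by rewrite (euler_half_salie hs hE) salie_eps_sum.
  split=> //; apply: sign_ge0_norm; rewrite sum_eps big_nat sumr_ge0 // => k _.
  by rewrite divr_ge0 ?exprn_ge0.
Qed.
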